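(* Let $G$ be a graph, $X_C \subseteq V(G)$, $z \geq 0$, and let $H$ be an $X_C$-certificate of order $z$ in $G$. Let $D$ be a connected component of $H - X_C$, let $H'$ be the connected component of $H$ containing $D$, and let $X_C' := X_C \cap V(H')$. Suppose that: (1) for each $x \in X_C'$ such that $H[\{x\} \cup V(D)]$ contains an odd cycle, there are at least $z$ connected components $D' \neq D$ of $H - X_C$ such that $H[\{x\} \cup V(D')]$ contains an odd cycle; and (2) for each pair of distinct $x, y \in X_C'$ and each parity $p \in \{0,1\}$, if $H[\{x,y\} \cup V(D)]$ contains an $(x,y)$-path of length congruent to $p$ modulo $2$, then there are at least $z$ connected components $D' \neq D$ of $H - X_C$ such that $H[\{x,y\} \cup V(D')]$ contains an $(x,y)$-path of length congruent to $p$ modulo $2$. Then $\mathrm{oct}(H) = \mathrm{oct}(H - V(D))$.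
   Context: $\mathrm{oct}(H)$ denotes the minimum size of a set $S\subseteq V(H)$ with $H - S$ bipartite. For $X_C \subseteq V(G)$, an $X_C$-certificate of order $z$ is a subgraph $H$ of $G$ such that $H - X_C$ is bipartite, $\mathrm{oct}(H)=|X_C|$, and each connected component $H'$ of $H$ has $|X_C\cap V(H')|\le z$. *)

From mathcomp Require Import all_boot.
Set Implicit Arguments. Unset Strict Implicit. Unset Printing Implicit Defensive.

(* A graph: a vertex set and an adjacency relation; edges are only counted
   between vertices of the vertex set (see [edgeb]). *)
Record graph (T : finType) := Graph { verts : {set T}; adj : rel T }.

Section Graphs.
Variable T : finType.
Implicit Types (g : graph T) (S : {set T}).

Definition edgeb g : rel T :=
  fun x y => [&& x \in verts g, y \in verts g & adj g x y].

Definition wf_graph g : Prop :=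
  (forall x y, adj g x y = adj g y x) /\ (forall x, ~~ adj g x x) /\
  (forall x y, adj g x y -> (x \in verts g) && (y \in verts g)).

Definition subgraph (H G : graph T) : Prop :=
  wf_graph H /\ verts H \subset verts G /\ (forall x y, adj H x y -> adj G x y).

Definition induced g S : graph T :=
  Graph (verts g :&: S) (fun x y => [&& adj g x y, x \in S & y \in S]).
Definition del g S : graph T := induced g (~: S).

Definition bipartiteb g : bool :=
  [exists f : {ffun T -> bool}, [forall x, forall y, edgeb g x y ==> (f x != f y)]].

Definition oct g : nat :=
  \big[minn/#|T|]_(S : {set T} | (S \subset verts g) && bipartiteb (del g S)) #|S|.

Definition component g (D : {set T}) : Prop :=
  exists2 x, x \in verts g & D = [set y | connect (edgeb g) x y].

Definition has_odd_cycle g : Prop :=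
  exists c : seq T, [/\ 3 <= size c, uniq c, cycle (edgeb g) c & odd (size c)].

Definition has_xy_path_parity g (x y : T) (p : bool) : Prop :=
  exists s : seq T, [/\ path (edgeb g) x s, last x s = y, uniq (x :: s)
                      & odd (size s) = p].

Definition certificate (G : graph T) (XC : {set T}) (z : nat) (H : graph T) : Prop :=
  [/\ subgraph H G, bipartiteb (del H XC), oct H = #|XC|
    & forall C, component H C -> #|XC :&: C| <= z].

Definition atleast_components g (z : nat) (D : {set T}) (P : {set T} -> Prop) : Prop :=
  exists F : {set {set T}}, z <= #|F| /\
    forall D', D' \in F -> [/\ component g D', D' != D & P D'].

End Graphs.

From mathcomp Require Import all_boot.
Set Implicit Arguments. Unset Strict Implicit. Unset Printing Implicit Defensive.

(* One inequality is monotonicity of oct under vertex deletion.  For the other,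
   let S be a minimum odd cycle transversal of H - D and K = V(H').  Since
   H - X_C and H - D - S are bipartite and no edge leaves K, the transversals
   can be exchanged inside K: (X_C ∩ K) ∪ (S \ K) is a transversal of H, and
   so is (S ∩ K) ∪ (X_C \ K) once D is also deleted.  If |X_C ∩ K| <= |S ∩ K|
   the first has size at most |S|.  Otherwise S1 := (S ∩ K) ∪ (X_C \ K) meets
   fewer than |X_C ∩ K| <= z of the pairwise disjoint components promised by
   (1) and (2), so each odd cycle through x ∪ D and each (x,y)-path through D
   is mirrored by one through a component D' avoiding S1.  The 2-colouring c
   of H - D - S1 colours these mirrors consistently, which forces the parity
   b u + c v, for b a 2-colouring of H - X_C, to be the same on all edges uv
   leaving D; flipping b on D accordingly extends c to H - S1.  Either way
   oct(H) <= |S|. *)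

Section Edges.
Variable T : finType.
Implicit Types (g : graph T) (U A B : {set T}).

Lemma edgeb_induced g U x y :
  edgeb (induced g U) x y = [&& edgeb g x y, x \in U & y \in U].
Proof.
rewrite /edgeb /= !inE.
by case: (x \in verts g); case: (y \in verts g); case: (x \in U); case: (y \in U);
  rewrite ?andbF.
Qed.

Lemma edgeb_del g A x y :
  edgeb (del g A) x y = [&& edgeb g x y, x \notin A & y \notin A].
Proof. by rewrite edgeb_induced !inE. Qed.

Lemma edgeb_del_del g A B : edgeb (del (del g A) B) =2 edgeb (del g (A :|: B)).
Proof.
move=> x y; rewrite !edgeb_del !inE !negb_or.
by case: (edgeb g x y); case: (x \in A); case: (y \in A); case: (x \in B).
Qed.

Lemma edgeb_induced_sym g U : symmetric (edgeb g) -> symmetric (edgeb (induced g U)).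
Proof.
move=> symg x y; rewrite !edgeb_induced symg.
by case: (x \in U); case: (y \in U); rewrite ?andbF.
Qed.

Lemma wf_edgeb_sym g : wf_graph g -> symmetric (edgeb g).
Proof.
by case=> symadj _ x y; rewrite /edgeb symadj andbCA.
Qed.

Lemma path_induced g U x s :
  path (edgeb g) x s -> {subset x :: s <= U} -> path (edgeb (induced g U)) x s.
Proof.
move=> ps sU; apply: (sub_in_path (P := mem U)) ps; last by apply/allP.
by move=> a b aU bU e; rewrite edgeb_induced e aU bU.
Qed.

End Edges.

Section Bipartite.
Variable T : finType.
Implicit Types (g : graph T) (A B K : {set T}).

Lemma bipartiteP g :
  reflect (exists f : T -> bool, forall x y, edgeb g x y -> f x != f y) (bipartiteb g).
Proof.
apply: (iffP existsP) => [[f /forallP fP]|[f fP]].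
  by exists f => x y; have /forallP/(_ y)/implyP := fP x.
exists [ffun x => f x]; apply/forallP=> x; apply/forallP=> y; apply/implyP=> e.
by rewrite !ffunE fP.
Qed.

Lemma bipartite_subrel g1 g2 :
  subrel (edgeb g1) (edgeb g2) -> bipartiteb g2 -> bipartiteb g1.
Proof.
move=> sub12 /bipartiteP[f fP]; apply/bipartiteP; exists f => x y /sub12; exact: fP.
Qed.

Lemma bipartite_eq g1 g2 : edgeb g1 =2 edgeb g2 -> bipartiteb g1 = bipartiteb g2.
Proof.
by move=> e12; apply/idP/idP; apply: bipartite_subrel => x y; rewrite e12.
Qed.

Lemma bipartite_del_glue g K A B :
  (forall x y, edgeb g x y -> (x \in K) = (y \in K)) ->
  bipartiteb (del g A) -> bipartiteb (del g B) ->
  bipartiteb (del g ((A :&: K) :|: (B :\: K))).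
Proof.
move=> Kclosed /bipartiteP[fA fAP] /bipartiteP[fB fBP]; apply/bipartiteP.
exists (fun x => if x \in K then fA x else fB x) => x y.
rewrite edgeb_del => /and3P[e xAB yAB]; have yK := Kclosed _ _ e.
move: xAB yAB; rewrite !inE -yK; case: ifP => xK /= xA yA.
  by apply: fAP; rewrite edgeb_del e; move: xA yA; rewrite ?andbT ?orbF => -> ->.
by apply: fBP; rewrite edgeb_del e; move: xA yA; rewrite ?andbF => -> ->.
Qed.

Lemma proper_coloring_path (e : rel T) (f : T -> bool) :
  (forall x y, e x y -> f x != f y) ->
  forall x s, path e x s -> f (last x s) = f x (+) odd (size s).
Proof.
move=> fP x s; elim: s x => [|y s IHs] x /=; first by rewrite addbF.
case/andP=> /fP exy /IHs ->; move: exy.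
by case: (f x); case: (f y); case: (odd (size s)).
Qed.

Lemma proper_coloring_cycle (e : rel T) (f : T -> bool) :
  (forall x y, e x y -> f x != f y) -> forall c, cycle e c -> ~~ odd (size c).
Proof.
move=> fP [|x s] //= /(proper_coloring_path fP).
rewrite last_rcons size_rcons /=.
by case: (f x); case: (odd (size s)).
Qed.

End Bipartite.

Lemma disjoint_family_avoid (T : finType) (F : {set {set T}}) (A : {set T}) :
  {in F &, forall K1 K2 : {set T}, K1 != K2 -> [disjoint K1 & K2]} -> #|A| < #|F| ->
  exists2 K, K \in F & [disjoint K & A].
Proof.
move=> Fdisj ltAF; apply/exists_inP; apply: contraLR ltAF.
rewrite negb_exists_in -leqNgt => /forall_inP meetA.
pose h K := [pick a in K :&: A].
have hP K : K \in F -> exists2 a, h K = Some a & a \in K :&: A.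
  move=> KF; rewrite /h; case: pickP => [a aKA|none]; first by exists a.
  case/negP: (meetA K KF); rewrite -setI_eq0; apply/eqP/setP=> a.
  by rewrite in_set0; apply: none.
have h_inj : {in F &, injective h}.
  move=> K1 K2 K1F K2F hK12.
  have [a h1a /setIP[aK1 _]] := hP _ K1F.
  have [b h2b /setIP[bK2 _]] := hP _ K2F.
  move: hK12; rewrite h1a h2b => -[ab]; rewrite -ab in bK2.
  apply/eqP/negPn/negP => /(Fdisj _ _ K1F K2F)/disjointFr/(_ aK1).
  by rewrite bK2.
rewrite -(card_in_imset h_inj) -(card_imset A Some_inj).
apply: subset_leq_card; apply/subsetP=> _ /imsetP[K KF ->].
have [a -> /setIP[_ aA]] := hP _ KF; exact: imset_f.
Qed.

Section Components.
Variables (T : finType) (g : graph T).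
Implicit Types (A K : {set T}).

Lemma component_sub_verts K : component g K -> K \subset verts g.
Proof.
case=> r rg ->; apply/subsetP=> y; rewrite inE.
have closed_verts : closed (edgeb g) (verts g).
  by move=> a b /and3P[-> ->].
by move/(closed_connect closed_verts) <-.
Qed.

Hypothesis symg : symmetric (edgeb g).

Lemma component_closed K : component g K ->
  forall x y, edgeb g x y -> (x \in K) = (y \in K).
Proof.
case=> r _ -> x y; rewrite !inE; exact: connect_closed (sym_connect_sym symg) r x y.
Qed.

Lemma component_disjoint K1 K2 :
  component g K1 -> component g K2 -> K1 != K2 -> [disjoint K1 & K2].
Proof.
move=> [r1 _ ->] [r2 _ ->]; apply: contraR => /pred0Pn[x /andP[]].
rewrite !inE => r1x r2x; apply/eqP/setP=> y; rewrite !inE.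
apply: same_connect; first exact: sym_connect_sym symg.
by apply: connect_trans r1x _; rewrite sym_connect_sym.
Qed.

Lemma component_path K x y : component g K -> x \in K -> y \in K ->
  exists s, [/\ path (edgeb g) x s, last x s = y, uniq (x :: s) & {subset s <= K}].
Proof.
move=> compK xK yK.
have : connect (edgeb g) x y.
  case: compK xK yK => r _ ->; rewrite !inE => rx ry.
  by apply: connect_trans ry; rewrite sym_connect_sym.
case/connectP=> s0 /shortenP[s ps us _] ->; exists s; split=> // v vs.
have /(path_connect ps) xv : v \in x :: s by rewrite inE vs orbT.
by rewrite -(closed_connect (component_closed compK) xv).
Qed.

Lemma atleast_components_avoid z (D A : {set T}) (P : {set T} -> Prop) :
  atleast_components g z D P -> #|A| < z ->
  exists D', [/\ component g D', D' != D, [disjoint D' & A] & P D'].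
Proof.
move=> [F [zF FP]] ltAz.
have Fdisj : {in F &, forall K1 K2 : {set T}, K1 != K2 -> [disjoint K1 & K2]}.
  by move=> K1 K2 /FP[c1 _ _] /FP[c2 _ _]; apply: component_disjoint.
have [K KF KA] := disjoint_family_avoid Fdisj (leq_trans ltAz zF).
by have [cK KD PK] := FP _ KF; exists K.
Qed.

End Components.

Lemma component_del_notin (T : finType) (g : graph T) (A K : {set T}) :
  component (del g A) K -> forall a, a \in K -> a \notin A.
Proof. by move/component_sub_verts/subsetP=> KgA a /KgA; rewrite !inE => /andP[]. Qed.

Section OddCycleTransversal.
Variable T : finType.
Implicit Types (g : graph T) (S : {set T}).

Lemma bigmin_leq (I : finType) (P : pred I) (F : I -> nat) m j :
  P j -> \big[minn/m]_(i | P i) F i <= F j.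
Proof.
rewrite unlock; move=> Pj; have : j \in index_enum I by rewrite mem_index_enum.
elim: (index_enum I) => [|i r IHr] //=; rewrite inE.
case/orP=> [/eqP<-|/IHr le_j]; first by rewrite Pj geq_minl.
by case: (P i) => //; rewrite geq_min le_j orbT.
Qed.

Lemma bigmin_attained (I : finType) (P : pred I) (F : I -> nat) m :
  \big[minn/m]_(i | P i) F i = m \/ exists2 i, P i & \big[minn/m]_(i | P i) F i = F i.
Proof.
apply: (big_ind (fun v => v = m \/ exists2 i, P i & v = F i)); first by left.
  by move=> v w vP wP; rewrite /minn; case: ifP.
by move=> i Pi; right; exists i.
Qed.

Lemma edgeb_del_setIverts g S : edgeb (del g (S :&: verts g)) =2 edgeb (del g S).
Proof.
move=> x y; rewrite !edgeb_del !inE.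
by case e: (edgeb g x y) => //=; case/and3P: e => -> -> _; rewrite !andbT.
Qed.

Lemma oct_le_card g S : bipartiteb (del g S) -> oct g <= #|S|.
Proof.
rewrite -(bipartite_eq (edgeb_del_setIverts g S)) => bipS.
apply: leq_trans (subset_leq_card (subsetIl S (verts g))).
by apply: bigmin_leq; rewrite subsetIr bipS.
Qed.

Lemma oct_attained g : exists2 S, bipartiteb (del g S) & #|S| = oct g.
Proof.
have bip_all : bipartiteb (del g (verts g)).
  by apply/bipartiteP; exists xpred0 => x y; rewrite edgeb_del => /and3P[/and3P[->]].
case: (bigmin_attained (fun S => (S \subset verts g) && bipartiteb (del g S))
  (fun S => #|S|) #|T|) => [octT|[S /andP[_ bipS] octS]].
  exists (verts g) => //; apply/eqP; rewrite eqn_leq oct_le_card //.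
  by rewrite /oct octT max_card.
by exists S.
Qed.

Lemma oct_del_le g D : oct (del g D) <= oct g.
Proof.
have [S bipS <-] := oct_attained g; apply: oct_le_card.
apply: bipartite_subrel bipS => x y; rewrite !edgeb_del => /and3P[/and3P[e _ _] -> ->].
by rewrite e.
Qed.

End OddCycleTransversal.

Section ExtendColoring.
Variables (T : finType) (H : graph T) (XC D S : {set T}) (b c : T -> bool).
Hypothesis symH : symmetric (edgeb H).
Hypothesis b_proper : forall u v, edgeb (del H XC) u v -> b u != b v.
Hypothesis c_proper : forall u v, edgeb (del H (D :|: S)) u v -> c u != c v.
Hypothesis compD : component (del H XC) D.
Hypothesis odd_cycle_elsewhere : forall x, x \in XC -> x \notin S ->
  (exists2 d, d \in D & edgeb H x d) ->
  has_odd_cycle (induced H (x |: D)) ->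
  exists D', [/\ component (del H XC) D', D' != D, [disjoint D' & S]
              & has_odd_cycle (induced H (x |: D'))].
Hypothesis parity_path_elsewhere : forall x y, x \in XC -> y \in XC ->
  x \notin S -> y \notin S -> x != y ->
  (exists2 d, d \in D & edgeb H x d) -> (exists2 d, d \in D & edgeb H y d) ->
  forall p, has_xy_path_parity (induced H ([set x; y] :|: D)) x y p ->
  exists D', [/\ component (del H XC) D', D' != D, [disjoint D' & S]
              & has_xy_path_parity (induced H ([set x; y] :|: D')) x y p].

Let symX : symmetric (edgeb (del H XC)) := edgeb_induced_sym _ symH.

Lemma c_proper_avoiding (U : {set T}) : (forall a, a \in U -> a \notin D :|: S) ->
  forall x y, edgeb (induced H U) x y -> c x != c y.
Proof.
move=> UDS x y; rewrite edgeb_induced => /and3P[e /UDS xDS /UDS yDS].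
by apply: c_proper; rewrite edgeb_del e xDS yDS.
Qed.

Lemma elsewhere_avoids (X D' : {set T}) :
  (forall a, a \in X -> (a \in XC) && (a \notin S)) ->
  component (del H XC) D' -> D' != D -> [disjoint D' & S] ->
  forall a, a \in X :|: D' -> a \notin D :|: S.
Proof.
move=> XP compD' D'D D'S a; rewrite !inE negb_or => /orP[/XP/andP[aX ->]|aD'].
  by rewrite andbT; apply: contraL aX; apply: component_del_notin compD a.
by rewrite (disjointFr (component_disjoint symX compD' compD D'D) aD') (disjointFr D'S aD').
Qed.

Lemma no_odd_cycle_elsewhere x D' : x \in XC -> x \notin S ->
  component (del H XC) D' -> D' != D -> [disjoint D' & S] ->
  ~ has_odd_cycle (induced H (x |: D')).
Proof.
move=> xX xS compD' D'D D'S [cy [_ _ cyc odd_cy]].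
have xP a : a \in [set x] -> (a \in XC) && (a \notin S).
  by rewrite inE => /eqP->; rewrite xX.
have := proper_coloring_cycle (c_proper_avoiding (elsewhere_avoids xP compD' D'D D'S)) cyc.
by rewrite odd_cy.
Qed.

Lemma parity_elsewhere x y p D' : x \in XC -> y \in XC -> x \notin S -> y \notin S ->
  component (del H XC) D' -> D' != D -> [disjoint D' & S] ->
  has_xy_path_parity (induced H ([set x; y] :|: D')) x y p -> c y = c x (+) p.
Proof.
move=> xX yX xS yS compD' D'D D'S [s [ps <- _ <-]].
have xyP a : a \in [set x; y] -> (a \in XC) && (a \notin S).
  by rewrite !inE => /orP[]/eqP->; rewrite ?xX ?yX.
exact: proper_coloring_path (c_proper_avoiding (elsewhere_avoids xyP compD' D'D D'S)) _ _ ps.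
Qed.

Lemma D_neighbor_in_XC u v : u \in D -> v \notin D -> edgeb H u v -> v \in XC.
Proof.
move=> uD vD e; apply: contraNT vD => vX.
rewrite -(component_closed symX compD (x := u)) // edgeb_del e vX andbT.
exact: component_del_notin compD u uD.
Qed.

Lemma boundary_parity d0 x0 u v :
  d0 \in D -> x0 \notin D -> x0 \notin S -> edgeb H x0 d0 ->
  u \in D -> v \notin D -> v \notin S -> edgeb H u v ->
  b u (+) c v = b d0 (+) c x0.
Proof.
move=> d0D x0D x0S e0 uD vD vS e.
have x0X : x0 \in XC by apply: D_neighbor_in_XC d0D x0D _; rewrite symH.
have vX : v \in XC := D_neighbor_in_XC uD vD e.
have [s [ps_del ls us sD]] := component_path symX compD d0D uD.
have bu : b u = b d0 (+) odd (size s).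
  by rewrite -ls; apply: proper_coloring_path b_proper _ _ ps_del.
have d0sD : {subset d0 :: s <= D} by move=> a; rewrite inE => /orP[/eqP->|/sD].
have notin_d0s a : a \notin D -> a \notin d0 :: s by apply: contra => /d0sD.
have ps (U : {set T}) : D \subset U -> path (edgeb (induced H U)) d0 s.
  move=> /subsetP DU; apply: path_induced (fun a ad0s => DU a (d0sD a ad0s)).
  by apply: sub_path ps_del => a a' /=; rewrite edgeb_del => /and3P[].
have inU a (X : {set T}) : a \in D -> a \in X :|: D by move=> aD; rewrite inE aD orbT.
have x0_attached : exists2 d, d \in D & edgeb H x0 d by exists d0.
case: (eqVneq v x0) => [vx0|vx0].
  rewrite {v vD vS vX}vx0 in e *; rewrite bu; case: (boolP (odd (size s))) => odd_s.
    exfalso; have [|D' [compD' D'D D'S]] := odd_cycle_elsewhere x0X x0S x0_attached.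
      exists [:: x0, d0 & s]; split.
      - by move: odd_s; rewrite /= !ltnS; case: (size s).
      - by rewrite cons_uniq notin_d0s.
      - rewrite /= rcons_path ls; apply/and3P; split; last first.
        + by rewrite edgeb_induced e !inE eqxx uD orbT.
        + by apply: ps; apply/subsetP=> a; apply: inU.
        by rewrite edgeb_induced e0 !inE eqxx d0D orbT.
      - by rewrite /= odd_s.
    exact: no_odd_cycle_elsewhere.
  by rewrite addbF.
have v_attached : exists2 d, d \in D & edgeb H v d by exists u; rewrite // symH.
have x0v : x0 != v by rewrite eq_sym.
have [|D' [compD' D'D D'S pD']] :=
  parity_path_elsewhere x0X vX x0S vS x0v x0_attached v_attached (p := odd (size s)).
  exists (d0 :: rcons s v); split.
  - rewrite /= rcons_path ls; apply/and3P; split.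
    + by rewrite edgeb_induced e0 !inE eqxx d0D !orbT.
    + by apply: ps; apply/subsetP=> a; apply: inU.
    by rewrite edgeb_induced e !inE eqxx uD !orbT.
  - by rewrite /= last_rcons.
  - rewrite -rcons_cons cons_uniq rcons_uniq mem_rcons in_cons negb_or eq_sym.
    by rewrite vx0 !notin_d0s.
  - by rewrite /= size_rcons /= negbK.
rewrite bu (parity_elsewhere x0X vX x0S vS compD' D'D D'S pD').
by case: (b d0); case: (c x0); case: (odd (size s)).
Qed.

Lemma bipartite_del_extend : bipartiteb (del H S).
Proof.
pose boundary (xd : T * T) :=
  [&& xd.1 \notin D, xd.1 \notin S, xd.2 \in D & edgeb H xd.1 xd.2].
(* [t] is the common value of [b u (+) c v] over the edges [uv] leaving [D]. *)
pose t := if [pick xd | boundary xd] is Some xd then b xd.2 (+) c xd.1 else false.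
have boundary_t u v : u \in D -> v \notin D -> v \notin S -> edgeb H u v ->
    b u (+) c v = t.
  move=> uD vD vS e; rewrite /t; case: pickP => [[x0 d0] /and4P[] /=|none].
    by move=> x0D x0S d0D e0; apply: boundary_parity.
  by have := none (v, u); rewrite /boundary /= vD vS uD symH e.
apply/bipartiteP; exists (fun v => if v \in D then ~~ (b v (+) t) else c v) => u v.
have DnX : forall a, a \in D -> a \notin XC := component_del_notin compD.
rewrite edgeb_del => /and3P[e uS vS].
case: ifP => uD; case: ifP => vD.
- have /b_proper : edgeb (del H XC) u v by rewrite edgeb_del e !DnX.
  by case: (b u); case: (b v); case: (t).
- by rewrite -(boundary_t u v) ?vD // addbA addbb; case: (c v).
- have evu : edgeb H v u by rewrite symH.
  by rewrite -(boundary_t v u) ?uD // addbA addbb; case: (c u).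
- by apply: c_proper; rewrite edgeb_del e !inE uD vD uS vS.
Qed.

End ExtendColoring.

Section ExchangeInComponent.
Variables (T : finType) (H : graph T) (XC D K S : {set T}) (z : nat).
Hypothesis symH : symmetric (edgeb H).
Hypothesis bipX : bipartiteb (del H XC).
Hypothesis compD : component (del H XC) D.
Hypothesis compK : component H K.
Hypothesis DK : D \subset K.
Hypothesis bipDS : bipartiteb (del H (D :|: S)).

Let closedK := component_closed symH compK.

Lemma oct_le_XC_in_S_out : oct H <= #|XC :&: K| + #|S :\: K|.
Proof.
apply: leq_trans (oct_le_card (bipartite_del_glue closedK bipX bipDS)) _.
apply: leq_trans (leq_card_setU _ _) _; rewrite leq_add2l; apply: subset_leq_card.
apply/subsetP=> a; rewrite !inE => /andP[aK /orP[aD|->]]; last by rewrite aK.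
by rewrite (subsetP DK a aD) in aK.
Qed.

Hypothesis odd_cycle_many : forall x, x \in XC :&: K ->
  has_odd_cycle (induced H (x |: D)) ->
  atleast_components (del H XC) z D (fun D' => has_odd_cycle (induced H (x |: D'))).
Hypothesis parity_path_many : forall x y, x \in XC :&: K -> y \in XC :&: K -> x != y ->
  forall p : bool, has_xy_path_parity (induced H ([set x; y] :|: D)) x y p ->
  atleast_components (del H XC) z D
    (fun D' => has_xy_path_parity (induced H ([set x; y] :|: D')) x y p).

Lemma oct_le_S_in_XC_out : #|S :&: K| < z -> oct H <= #|S :&: K| + #|XC :\: K|.
Proof.
move=> ltSz; set S1 := (S :&: K) :|: (XC :\: K).
have symX : symmetric (edgeb (del H XC)) := edgeb_induced_sym _ symH.
have bipDS1 : bipartiteb (del H (D :|: S1)).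
  have -> : D :|: S1 = ((D :|: S) :&: K) :|: (XC :\: K).
    apply/setP=> a; rewrite !inE; case: (boolP (a \in D)) => [aD|_] //=.
    by rewrite (subsetP DK a aD).
  exact: bipartite_del_glue closedK bipDS bipX.
have attached_in_K x : (exists2 d, d \in D & edgeb H x d) -> x \in K.
  by case=> d dD e; rewrite (closedK e) (subsetP DK d dD).
have avoid_S1 P : atleast_components (del H XC) z D P ->
    exists D', [/\ component (del H XC) D', D' != D, [disjoint D' & S1] & P D'].
  case/(atleast_components_avoid symX)/(_ ltSz) => D' [compD' D'D D'SK PD'].
  exists D'; split=> //; rewrite disjoints_subset; apply/subsetP=> a aD'.
  rewrite !inE negb_or (negbTE (component_del_notin compD' aD')) andbF andbT.
  by have := disjointFr D'SK aD'; rewrite inE => ->.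
have [b b_proper] := bipartiteP _ bipX.
have [c c_proper] := bipartiteP _ bipDS1.
apply: leq_trans (leq_card_setU _ _); apply: oct_le_card.
apply: (bipartite_del_extend symH b_proper c_proper compD).
- move=> x xX _ /attached_in_K xK oddx; apply: avoid_S1.
  by apply: odd_cycle_many; rewrite // inE xX.
- move=> x y xX yX _ _ xy /attached_in_K xK /attached_in_K yK p pxy; apply: avoid_S1.
  by apply: parity_path_many; rewrite // inE ?xX ?yX.
Qed.

End ExchangeInComponent.

Theorem mainTheorem7 (T : finType) (G : graph T) (XC : {set T}) (z : nat)
  (H : graph T) (D H'v : {set T}) :
  wf_graph G -> XC \subset verts G ->
  certificate G XC z H ->
  component (del H XC) D ->
  component H H'v -> D \subset H'v ->
  (forall x, x \in XC :&: H'v ->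
     has_odd_cycle (induced H (x |: D)) ->
     atleast_components (del H XC) z D
       (fun D' => has_odd_cycle (induced H (x |: D')))) ->
  (forall x y, x \in XC :&: H'v -> y \in XC :&: H'v -> x != y ->
   forall p : bool,
     has_xy_path_parity (induced H ([set x; y] :|: D)) x y p ->
     atleast_components (del H XC) z D
       (fun D' => has_xy_path_parity (induced H ([set x; y] :|: D')) x y p)) ->
  oct H = oct (del H D).
Proof.
move=> _ _ [[wfH _] bipX octH orderz] compD compH' DH' odd_cycle_many parity_path_many.
have symH := wf_edgeb_sym wfH.
apply/eqP; rewrite eqn_leq oct_del_le andbT.
have [S bipS <-] := oct_attained (del H D).
have bipDS : bipartiteb (del H (D :|: S)).
  by rewrite -(bipartite_eq (edgeb_del_del H D S)).
case: (leqP #|XC :&: H'v| #|S :&: H'v|) => [XS|SX].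
  apply: leq_trans (oct_le_XC_in_S_out symH bipX compH' DH' bipDS) _.
  by rewrite -(cardsID H'v S) leq_add2r.
have := oct_le_S_in_XC_out symH bipX compD compH' DH' bipDS
  odd_cycle_many parity_path_many (leq_trans SX (orderz _ compH')).
by rewrite octH -(cardsID H'v XC) leq_add2r leqNgt SX.
Qed.
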